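(* Let $\mathbf{S} = [s_{ij}] \in \mathbb{R}^{m_q \times m}$ be the similarity matrix between a query vector set $\mathbf{Q}=\{\mathbf{q}_1,\dots,\mathbf{q}_{m_q}\}$ and a target vector set $\mathbf{T}=\{\mathbf{t}_1,\dots,\mathbf{t}_m\}$, with entries $s_{ij}\in[0,1]$, and let $s_{\min} = \min_{i,j} s_{ij}$. Let $\hat{\mathbf{S}} = [\hat S_{ij}]$ be the estimated similarity matrix obtained from $L \in \mathbb{Z}^+$ hash functions of a locality-sensitive hashing family (so that each estimated entry $\hat S_{ij}$ is distributed as $L^{-1}\mathcal{B}(s_{ij}, L)$, i.e. $L\hat S_{ij}$ is binomial with $L$ trials and success probability $s_{ij}$). Let $\tau_2 \in (0, s_{\min})$ and $\Delta_2 = s_{\min} - \tau_2$. Then $$\Pr\big[\sigma(\hat{\mathbf{S}}) \leq s_{\min} - \Delta_2\big] \leq m_q m\, \xi^L, \qquad \text{where } \xi = \left(\frac{s_{\min}(1-\tau_2)}{\tau_2(1-s_{\min})}\right)^{\tau_2}\left(\frac{1-s_{\min}}{1-\tau_2}\right),$$ and $\sigma(\mathbf{A}) = \min\big(\min_i \max_j a_{ij}, \min_j \max_i a_{ij}\big)$ for a matrix $\mathbf{A}=[a_{ij}] \in \mathbb{R}^{m_q\times m}$.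
   Context: A locality-sensitive hash function $h$ satisfies $\Pr(h(\mathbf{a})=h(\mathbf{b})) = \operatorname{sim}(\mathbf{a},\mathbf{b}) \in [0,1]$. With $L$ such hash functions, the estimated similarity of a pair of vectors is the fraction of the $L$ hash functions on which they collide, hence a scaled binomial $L^{-1}\mathcal{B}(\operatorname{sim}, L)$. Vectors are $L2$-normalized and $\operatorname{sim}(\mathbf{q},\mathbf{v}) = \mathbf{q}^T\mathbf{v}$. *)

From HB Require Import structures.
From mathcomp Require Import all_boot all_order all_algebra.
From mathcomp Require Import all_classical all_reals all_analysis.
Set Implicit Arguments. Unset Strict Implicit. Unset Printing Implicit Defensive.
Import Order.TTheory GRing.Theory Num.Theory.
Local Open Scope ring_scope.

(* minimum / maximum of a finite nonempty family, defaulting to the first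
   value (so that the result is an actual element of the family);
   for an empty family the value (0) is irrelevant. *)
Definition fmin {R : realDomainType} {I : finType} (F : I -> R) : R :=
  \big[Num.min/head 0 [seq F i | i <- enum I]]_(i : I) F i.
Definition fmax {R : realDomainType} {I : finType} (F : I -> R) : R :=
  \big[Num.max/head 0 [seq F i | i <- enum I]]_(i : I) F i.

Definition sigma {R : realDomainType} {p q : nat} (A : 'M[R]_(p, q)) : R :=
  Num.min (fmin (fun i => fmax (fun j => A i j)))
          (fmin (fun j => fmax (fun i => A i j))).

From HB Require Import structures.
From mathcomp Require Import all_boot all_order all_algebra.
From mathcomp Require Import all_classical all_reals all_analysis.
From mathcomp Require Import ring lra.
Import Order.TTheory GRing.Theory Num.Theory.
Local Open Scope classical_set_scope.
Local Open Scope ring_scope.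

(* If sigma(S^) <= tau then some row (or column) of S^ lies entirely below
   tau; this exact description makes the event measurable, and it implies
   that some single entry S^_ij is <= tau, so a union bound over the
   mq * m entries reduces the claim to one binomial lower tail.  For
   L S^_ij ~ B(L, s) with s >= smin, Markov's inequality applied to mu^(-L S^_ij)
   gives P(S^_ij <= tau) <= (mu^tau (1 - s + s / mu))^L for every mu >= 1;
   the bracket decreases in s, and the tilt mu = smin (1 - tau) / (tau (1 - smin))
   turns its value at s = smin into (1 - smin) / (1 - tau), which is xi. *)

Lemma fsbig_setT (R : Type) (idx : R) (op : Monoid.com_law idx) (I : finType) (f : I -> R) :
  \big[op/idx]_(i \in [set: I]) f i = \big[op/idx]_(i : I) f i.
Proof.
rewrite [RHS]fsbig_seq ?index_enum_uniq //; congr (\big[_/_]_(i \in _) _).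
by apply/seteqP; split=> i //= _; rewrite mem_index_enum.
Qed.

Section fmin_fmax.
Context {R : realDomainType} {I : finType} (i0 : I).

Lemma head_map_enum (F : I -> R) : head 0 [seq F i | i <- enum I] = F (head i0 (enum I)).
Proof. by have := mem_enum I i0; case: (enum I). Qed.

Lemma fmin_leP (F : I -> R) t : fmin F <= t <-> exists i, F i <= t.
Proof.
split=> [|[i Fit]]; last by apply: le_trans Fit; exact: bigmin_le.
apply: contraPP => /forallNP Ft; apply/negP; rewrite -ltNge.
apply/bigmin_gtP; split=> [|i _]; last by rewrite ltNge; apply/negP/Ft.
by rewrite head_map_enum ltNge; apply/negP/Ft.
Qed.

Lemma fmax_leP (F : I -> R) t : fmax F <= t <-> forall i, F i <= t.
Proof.
split=> [/bigmax_leP[_ Ft] i|Ft]; first exact: Ft.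
by apply/bigmax_leP; rewrite head_map_enum.
Qed.
End fmin_fmax.

Lemma sigma_leP {R : realDomainType} {p q : nat} (i0 : 'I_p) (j0 : 'I_q)
    (A : 'M[R]_(p, q)) t :
  sigma A <= t <-> (exists i, forall j, A i j <= t) \/ (exists j, forall i, A i j <= t).
Proof.
rewrite /sigma ge_min; split.
- case/orP=> [/(fmin_leP i0)[i /(fmax_leP j0)]|/(fmin_leP j0)[j /(fmax_leP i0)]].
    by left; exists i.
  by right; exists j.
- case=> [[i Ai]|[j Aj]]; apply/orP; [left|right].
    by apply/(fmin_leP i0); exists i; apply/(fmax_leP j0).
  by apply/(fmin_leP j0); exists j; apply/(fmax_leP i0).
Qed.

Lemma sigma_mx_le_set {R : realDomainType} {T : Type} {p q : nat} (i0 : 'I_p) (j0 : 'I_q)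
    (A : T -> 'I_p -> 'I_q -> R) t :
  [set w | sigma (\matrix_(i, j) A w i j) <= t] =
  \bigcup_i \bigcap_j [set w | A w i j <= t] `|` \bigcup_j \bigcap_i [set w | A w i j <= t].
Proof.
apply/seteqP; split=> w /=.
- case/(sigma_leP i0 j0)=> [[i Ai]|[j Aj]]; [left; exists i|right; exists j] => // k _ /=.
    by have := Ai k; rewrite mxE.
  by have := Aj k; rewrite mxE.
- move=> Ew; apply/(sigma_leP i0 j0); case: Ew => [[i _ Ai]|[j _ Aj]]; [left; exists i|right; exists j].
    by move=> k; rewrite mxE; apply: Ai.
  by move=> k; rewrite mxE; apply: Aj.
Qed.

Lemma content_sub_finsum d (T : semiRingOfSetsType d) (R : realFieldType)
    (mu : {content set T -> \bar R}) (I : finType) (A : set T) (F : I -> set T) :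
  (forall i, measurable (F i)) -> measurable A -> A `<=` \bigcup_i F i ->
  (mu A <= \sum_i mu (F i))%E.
Proof.
move=> mF mA AF; rewrite -fsbig_setT.
by apply: content_sub_fsum => //; exact: finite_finset.
Qed.

(* xi = exp(- KL(tau || s)), the Chernoff-Hoeffding rate. *)
Definition chernoff_rate {R : realType} (s tau : R) : R :=
  powR (s * (1 - tau) / (tau * (1 - s))) tau * ((1 - s) / (1 - tau)).

Section binomial_tail.
Context {R : realType} (L : nat).

Lemma binomial_prob_le_mgf (s tau mu : R) (U : set nat) :
  0 <= s <= 1 -> 1 <= mu -> (forall k, U k -> k%:R <= tau * L%:R) ->
  (binomial_prob L s U <= ((powR mu tau * (1 - s + s / mu)) ^+ L)%:E)%E.
Proof.
move=> /andP[s0 s1] mu1 Utau; have mu0 : 0 < mu by exact: lt_le_trans mu1.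
set c := powR mu tau.
have mgfE : (c * (1 - s + s / mu)) ^+ L =
    \sum_(k < L.+1) s ^+ k * (1 - s) ^+ (L - k) *+ 'C(L, k) * (c ^+ L / mu ^+ k).
  rewrite exprMn exprDn mulr_sumr; apply: eq_bigr => k _.
  by rewrite expr_div_n !mulrnAl !mulrnAr; congr (_ *+ _); ring.
rewrite (@binomial_probE R L s s0 s1).
under eq_bigr do rewrite diracE -EFinM.
rewrite sumEFin lee_fin mgfE; apply: ler_sum => k _ /=.
have pmf_ge0 : 0 <= s ^+ k * (1 - s) ^+ (L - k) *+ 'C(L, k).
  by rewrite mulrn_wge0 // mulr_ge0 ?exprn_ge0 ?subr_ge0.
case: (boolP (nat_of_ord k \in U)) => [/set_mem/Utau kL|_]; last first.
  by rewrite mulr0 mulr_ge0 // divr_ge0 ?exprn_ge0 ?powR_ge0 ?ltW.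
rewrite mulr1 -[leLHS]mulr1 ler_wpM2l // ler_pdivlMr ?exprn_gt0 // mul1r.
rewrite -(powR_mulrn _ (ltW mu0)) -(powR_mulrn _ (powR_ge0 _ _)) -powRrM.
by apply: ler_powR; rewrite // mulr_natr.
Qed.

Lemma binomial_prob1 (U : set nat) : binomial_prob L (1 : R) U = \d_L U.
Proof.
rewrite (@binomial_probE R L 1 ler01 (lexx 1)) big_ord_recr /= subnn binn.
rewrite big1 ?add0e => [|i _]; first by rewrite expr1n expr0 mul1r mul1e.
by rewrite unstable.onem1 expr0n subn_eq0 leqNgt ltn_ord mulr0 mul0rn mul0e.
Qed.

Lemma binomial_prob_freq_le_chernoff (s smin tau : R) :
  (0 < L)%N -> 0 < tau < smin -> smin <= s <= 1 ->
  (binomial_prob L s [set k | (k%:R / L%:R <= tau)%R] <= (chernoff_rate smin tau ^+ L)%:E)%E.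
Proof.
move=> L0 /andP[tau0 tau_smin] /andP[smin_s s1].
have L0R : (0 : R) < L%:R by rewrite ltr0n.
have [smin1|smin1] := ltP smin 1; last first.
  (* the tilt used below would divide by 1 - smin = 0, but B(L, 1) is the Dirac mass at L *)
  have -> : s = 1 by lra.
  rewrite binomial_prob1 diracE memNset /= ?divff ?gt_eqF //; last lra.
  by rewrite lee_fin exprn_ge0 // mulr_ge0 ?powR_ge0 // divr_ge0; lra.
set mu := smin * (1 - tau) / (tau * (1 - smin)).
have mu1 : 1 <= mu by rewrite /mu ler_pdivlMr ?mul1r; nra.
apply: le_trans (binomial_prob_le_mgf s tau mu _ _ mu1 _) _.
- by rewrite s1 andbT; lra.
- by move=> k /=; rewrite ler_pdivrMr.
have mu0 : 0 < mu by exact: lt_le_trans mu1.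
have mgf_ge0 : 0 <= 1 - s + s / mu.
  by rewrite addr_ge0 ?subr_ge0 // divr_ge0 ?(ltW mu0) //; lra.
have mgf_le : 1 - s + s / mu <= (1 - smin) / (1 - tau).
  have -> : (1 - smin) / (1 - tau) = 1 - smin + smin / mu.
    by rewrite /mu; field; rewrite !gt_eqF ?subr_gt0 //; lra.
  have : 0 <= (s - smin) * (1 - mu^-1) by rewrite mulr_ge0 ?subr_ge0 ?invf_le1.
  nra.
rewrite /chernoff_rate -/mu lee_fin.
have rate_ge0 := le_trans mgf_ge0 mgf_le.
apply: lerXn2r; rewrite ?nnegrE.
- exact: mulr_ge0 (powR_ge0 _ _) mgf_ge0.
- exact: mulr_ge0 (powR_ge0 _ _) rate_ge0.
- by rewrite ler_wpM2l ?powR_ge0.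
Qed.

End binomial_tail.

Theorem lemma3 (R : realType) (d : measure_display) (Omega : measurableType d)
    (P : probability Omega R) (mq m : nat) (S : 'M[R]_(mq, m)) (smin : R)
    (L : nat) (K : 'I_mq -> 'I_m -> {RV P >-> nat}) (tau2 : R) :
  (0 < mq)%N -> (0 < m)%N ->
  (forall i j, 0 <= S i j <= 1) ->
  (forall i j, smin <= S i j) -> (exists i j, S i j = smin) ->
  (0 < L)%N ->
  (forall i j, distribution P (K i j) = binomial_prob L (S i j)) ->
  0 < tau2 < smin ->
  let Delta2 := smin - tau2 in
  let xi := powR (smin * (1 - tau2) / (tau2 * (1 - smin))) tau2
            * ((1 - smin) / (1 - tau2)) in
  (P [set w | (sigma (\matrix_(i, j) ((K i j w)%:R / L%:R)) <= smin - Delta2)%R]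
    <= ((mq * m)%:R * xi ^+ L)%:E)%E.
Proof.
move=> mq0 m0 S01 Sge _ L0 K_binom tau2_bounds; cbv zeta.
rewrite -/(chernoff_rate smin tau2) subKr.
pose i0 := Ordinal mq0; pose j0 := Ordinal m0.
pose B i j := K i j @^-1` [set k | (k%:R / L%:R <= tau2)%R].
have mB i j : measurable (B i j) by exact: measurable_funPTI.
have PB i j : (P (B i j) <= ((chernoff_rate smin tau2) ^+ L)%:E)%E.
  have /andP[_ S1] := S01 i j.
  rewrite -[P _]/(distribution P (K i j) _) K_binom.
  by apply: binomial_prob_freq_le_chernoff => //; rewrite Sge.
rewrite (sigma_mx_le_set i0 j0 (fun w i j => (K i j w)%:R / L%:R)).
apply: le_trans (@content_sub_finsum _ _ _ P _ _ (fun p : 'I_mq * 'I_m => B p.1 p.2) _ _ _) _.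
- by move=> [i j]; exact: mB.
- by apply: measurableU; apply: fin_bigcup_measurable finite_finset _ => i _;
    apply: fin_bigcap_measurable finite_finset _ => j _; exact: mB.
- by move=> w [[i _ Bi]|[j _ Bj]]; [exists (i, j0); last apply: Bi|exists (i0, j); last apply: Bj].
apply: (le_trans (y := \sum_(p : 'I_mq * 'I_m) ((chernoff_rate smin tau2) ^+ L)%:E)).
  by apply: lee_sum => p _; exact: PB.
by rewrite sumEFin sumr_const card_prod !card_ord mulr_natl.
Qed.
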